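(* Let $\vec G$ be a connected digraph on a linearly ordered edge set $E$, bipolar with respect to $p=\min(E)$, let $\omega=\max(E)$ and $T=\alpha(\vec G)$. If $\omega\in T$, then $\vec G/\omega$ is bipolar w.r.t. $p$ and $T\setminus\{\omega\}=\alpha(\vec G/\omega)$. If $\omega\notin T$, then $\vec G\setminus\omega$ is bipolar w.r.t. $p$ and $T=\alpha(\vec G\setminus\omega)$. In particular, $\vec G/\omega$ or $\vec G\setminus\omega$ is bipolar w.r.t. $p$.
   Context: Graphs are finite, loops and multiple edges allowed; cycles and cocycles (inclusion-minimal nonempty edge cuts) are edge subsets. $\vec G/\omega$ and $\vec G\setminus\omega$ denote contraction and deletion of $\omega$, with inherited orientations and order. For a spanning tree $T$ and $t\in T$, $C^*(T;t)$ is the unique cocycle contained in $(E\setminus T)\cup\{t\}$; for $e\notin T$, $C(T;e)$ is the unique cycle contained in $T\cup\{e\}$. In a digraph, a cycle gives two opposite signed cycles (fix a traversal direction; forward edges positive, backward negative), and a cocycle between vertex sides $(X,V\setminus X)$ gives two opposite signed cocycles (edges from $X$ to $V\setminus X$ positive, others negative); fundamental cycles/cocycles are signed so that $e$ (resp. $t$) is positive. A digraph is bipolar w.r.t. $p$ if it is acyclic and has a unique source and a unique sink, which are the endpoints of $p$ (a single isthmus edge $p$ counts as bipolar). For $\vec G$ bipolar w.r.t. $p=\min(E)$, the fully optimal spanning tree $\alpha(\vec G)$ is the unique spanning tree $T$ such that for all $b\in T\setminus\{p\}$, $b$ and $\min(C^*(T;b))$ have opposite signs in $C^*(T;b)$,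 and for all $e\in E\setminus T$, $e$ and $\min(C(T;e))$ have opposite signs in $C(T;e)$ (existence and uniqueness is a known theorem). *)

From mathcomp Require Import all_boot all_order.
Set Implicit Arguments. Unset Strict Implicit. Unset Printing Implicit Defensive.
Import Order.TTheory.
Local Open Scope order_scope.

Section Digraphs.
Variables (V : finType) (d : Order.disp_t) (E : finOrderType d).

Record digraph := Digraph {
  vset : {set V};
  eset : {set E};
  src : E -> V;
  tgt : E -> V }.

Definition wf (G : digraph) :=
  forall e, e \in eset G -> src G e \in vset G /\ tgt G e \in vset G.

Definition is_min (A : {set E}) (x : E) := x \in A /\ forall y, y \in A -> x <= y.
Definition is_max (A : {set E}) (x : E) := x \in A /\ forall y, y \in A -> y <= x.

Definition adj (G : digraph) (S : {set E}) : rel V :=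
  fun u v => [exists e in S, ((src G e == u) && (tgt G e == v))
                          || ((src G e == v) && (tgt G e == u))].

Definition connected_via (G : digraph) (S : {set E}) :=
  forall u v, u \in vset G -> v \in vset G -> connect (adj G S) u v.

Definition connected (G : digraph) := connected_via G (eset G).

(* Cycles as closed traversals: a step (e, b) traverses edge e forwards
   (from src to tgt) if b = true, backwards otherwise. *)
Definition st_start (G : digraph) (x : E * bool) := if x.2 then src G x.1 else tgt G x.1.
Definition st_end (G : digraph) (x : E * bool) := if x.2 then tgt G x.1 else src G x.1.

Definition is_cycle_trav (G : digraph) (s : seq (E * bool)) :=
  [/\ s != [::], all (fun x => x.1 \in eset G) s, uniq (map fst s),
      uniq (map (st_start G) s) & map (st_end G) s = map (st_start G) (rot 1 s)].

Definition cyc_edges (s : seq (E * bool)) : {set E} := [set e | e \in map fst s].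

(* sign of edge e in the signed cycle given by the traversal s *)
Definition cyc_pos (s : seq (E * bool)) (e : E) := (e, true) \in s.

Definition has_directed_cycle (G : digraph) :=
  exists s, is_cycle_trav G s /\ all snd s.

Definition is_source (G : digraph) (v : V) :=
  v \in vset G /\ forall e, e \in eset G -> tgt G e != v.
Definition is_sink (G : digraph) (v : V) :=
  v \in vset G /\ forall e, e \in eset G -> src G e != v.

Definition bipolar (G : digraph) (p : E) :=
  [/\ p \in eset G, ~ has_directed_cycle G &
      exists s t, (forall v, is_source G v <-> v = s) /\
                  (forall v, is_sink G v <-> v = t) /\
                  ((s = src G p /\ t = tgt G p) \/ (s = tgt G p /\ t = src G p))].

Definition spanning_tree (G : digraph) (T : {set E}) :=
  [/\ T \subset eset G, connected_via G T &
      forall s, is_cycle_trav G s -> ~ (cyc_edges s \subset T)].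

Definition cut (G : digraph) (X : {set V}) : {set E} :=
  [set e in eset G | (src G e \in X) != (tgt G e \in X)].

Definition is_cocycle_side (G : digraph) (X : {set V}) :=
  cut G X != set0 /\
  forall Y : {set V}, cut G Y != set0 -> cut G Y \subset cut G X -> cut G Y = cut G X.

(* sign of an edge e of cut G X in the signed cocycle (X, V \ X) *)
Definition cut_pos (G : digraph) (X : {set V}) (e : E) := src G e \in X.

Definition fully_optimal (G : digraph) (T : {set E}) :=
  spanning_tree G T /\
  forall p, is_min (eset G) p ->
  (forall b, b \in T -> b != p ->
     (* C^*(T;b) = cut G X, the unique cocycle in (E \ T) u {b} *)
     forall X : {set V}, is_cocycle_side G X ->
       cut G X \subset (eset G :\: T) :|: [set b] ->
       forall f, is_min (cut G X) f -> cut_pos G X b != cut_pos G X f) /\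
  (forall e, e \in eset G :\: T ->
     (* C(T;e) = cyc_edges s, the unique cycle in T u {e} *)
     forall s, is_cycle_trav G s -> cyc_edges s \subset T :|: [set e] ->
       forall f, is_min (cyc_edges s) f -> cyc_pos s e != cyc_pos s f).

Definition delete (G : digraph) (w : E) : digraph :=
  Digraph (vset G) (eset G :\ w) (src G) (tgt G).

Definition contract (G : digraph) (w : E) : digraph :=
  let u := src G w in let v := tgt G w in
  let f := fun x => if x == u then v else x in
  Digraph (if u == v then vset G else vset G :\ u) (eset G :\ w)
          (fun e => f (src G e)) (fun e => f (tgt G e)).

End Digraphs.

(* A fully optimal spanning tree is characterised by sign conditions comparing
   every edge with the smallest edge of its fundamental cycle or cocycle.  These
   conditions alone force bipolarity w.r.t. p = min(E): a directed closed walk, or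
   a nonempty cut directed away from one side and avoiding p, would cross the
   fundamental cocycle (resp. cycle) of a suitably minimal tree (resp. cotree) edge
   in one direction only, whereas a closed walk leaves a vertex set as often as it
   enters it.  Deleting w = max(E) when w is not in T, or contracting it when it
   is, leaves the other fundamental cycles and cocycles unchanged up to removing
   w, with the same signs; since w is never their minimum, T minus w stays fully
   optimal in the minor, which is therefore bipolar. *)

From mathcomp Require Import all_boot all_order.
Set Implicit Arguments. Unset Strict Implicit. Unset Printing Implicit Defensive.
Import Order.TTheory.

Lemma count_split (T : Type) (a b : pred T) s :
  count a s = count (predI b a) s + count (predI (predC b) a) s.
Proof. by rewrite -!count_filter count_predC size_filter. Qed.

Lemma count_rot (T : Type) (a : pred T) n s : count a (rot n s) = count a s.
Proof. by rewrite /rot count_cat addnC -count_cat cat_take_drop. Qed.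

Lemma count_rot1_switch (T : Type) (f g : pred T) s :
  map g s = rot 1 (map f s) ->
  count (fun x => f x && ~~ g x) s = count (fun x => ~~ f x && g x) s.
Proof.
move=> gE; have : count id (map f s) = count id (map g s) by rewrite gE count_rot.
have predIC a b : count (predI a b) s = count (predI b a) s.
  by apply: eq_count => x /=; rewrite andbC.
by rewrite !count_map (count_split g f) (count_split f g) (predIC g f) => /addnI; rewrite predIC.
Qed.

Section ClosedWalks.
Variables (V : finType) (d : Order.disp_t) (E : finOrderType d).
Variables (H : digraph V E) (X : {set V}).
Implicit Type s : seq (E * bool).

Definition closed_walk s := map (st_end H) s = map (st_start H) (rot 1 s).
Definition leaves (x : E * bool) := (st_start H x \in X) && (st_end H x \notin X).
Definition enters (x : E * bool) := (st_start H x \notin X) && (st_end H x \in X).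

Lemma count_leaves_enters s : closed_walk s -> count leaves s = count enters s.
Proof.
move=> cw; apply: count_rot1_switch.
by rewrite -map_rot; have := congr1 (map (mem X)) cw; rewrite -!map_comp.
Qed.

Lemma closed_walk_no_leaves s : closed_walk s ->
  {in s, forall x, ~~ enters x} -> {in s, forall x, ~~ leaves x}.
Proof.
move=> cw noin x xs; apply/negP => lx.
have : 0 < count leaves s by rewrite -has_count; apply/hasP; exists x.
by rewrite count_leaves_enters // -has_count => /hasP[y ys]; apply/negP/noin.
Qed.

Lemma leavesE x : x.1 \in eset H ->
  leaves x = (x.1 \in cut H X) && (x.2 == cut_pos H X x.1).
Proof.
case: x => e [] /= he; rewrite /leaves /st_start /st_end /cut /cut_pos inE he /=;
by case: (src H e \in X); case: (tgt H e \in X).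
Qed.

Lemma entersE x : x.1 \in eset H ->
  enters x = (x.1 \in cut H X) && (x.2 != cut_pos H X x.1).
Proof.
case: x => e [] /= he; rewrite /enters /st_start /st_end /cut /cut_pos inE he /=;
by case: (src H e \in X); case: (tgt H e \in X).
Qed.

Lemma closed_walk_one_way_cut s : closed_walk s -> all (fun x => x.1 \in eset H) s ->
  {in s, forall x, x.1 \in cut H X -> x.2 = cut_pos H X x.1} ->
  {in s, forall x, x.1 \notin cut H X}.
Proof.
move=> cw /allP sE coh.
have noin : {in s, forall y, ~~ enters y}.
  move=> y ys; rewrite entersE ?sE //; apply/nandP.
  by case: (boolP (y.1 \in cut H X)) => yX; [right; rewrite (coh y ys yX) negbK | left].
move=> x xs; apply: contraNN (closed_walk_no_leaves cw noin xs) => xX.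
by rewrite leavesE ?sE // xX (coh x xs xX) eqxx.
Qed.

End ClosedWalks.

Section ClosedTrails.
Variables (V : finType) (d : Order.disp_t) (E : finOrderType d).
Variable H : digraph V E.
Implicit Type s : seq (E * bool).

Definition closed_trail s :=
  [/\ all (fun x => x.1 \in eset H) s, uniq (map fst s) & closed_walk H s].

Lemma cycle_trav_closed_trail s : is_cycle_trav H s -> closed_trail s.
Proof. by case. Qed.

Lemma mem_cyc_edges s e b : (e, b) \in s -> e \in cyc_edges s.
Proof. by move=> es; rewrite inE; apply/mapP; exists (e, b). Qed.

Lemma cyc_posE s e b : uniq (map fst s) -> (e, b) \in s -> cyc_pos s e = b.
Proof.
rewrite /cyc_pos; case: b => // us ef; apply/negP => et.
elim: s us ef et => //= x s IH /andP[xs us]; rewrite !inE.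
case/orP=> [/eqP ef|ef]; case/orP=> [/eqP et|et] //; first by rewrite -et in ef.
- by case/negP: xs; rewrite -ef (map_f fst et).
- by case/negP: xs; rewrite -et (map_f fst ef).
exact: IH.
Qed.

Lemma sum_steps s (F : E -> bool -> nat) : uniq (map fst s) ->
  \sum_(x <- s) F x.1 x.2 = \sum_(e in cyc_edges s) F e (cyc_pos s e).
Proof.
move=> us; rewrite big_seq (eq_bigr (fun x => F x.1 (cyc_pos s x.1))) -?big_seq; last first.
  by case=> e b /= es; rewrite (cyc_posE us es).
rewrite -(big_map fst xpredT (fun e => F e (cyc_pos s e))) big_uniq //.
by apply: eq_bigl => e; rewrite inE.
Qed.

Lemma cycle_cut_balance s X : closed_trail s ->
  \sum_(e in cyc_edges s :&: cut H X) (cyc_pos s e == cut_pos H X e) =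
  \sum_(e in cyc_edges s :&: cut H X) (cyc_pos s e != cut_pos H X e).
Proof.
case=> /allP sE us cw.
have count_sum (P : pred (E * bool)) : count P s = \sum_(x <- s) P x.
  by rewrite -sum1_count big_mkcond.
have crossings (Q : E -> bool -> bool) :
    \sum_(x <- s) ((x.1 \in cut H X) && Q x.1 x.2) =
    \sum_(e in cyc_edges s :&: cut H X) Q e (cyc_pos s e).
  rewrite (sum_steps (fun e b => (e \in cut H X) && Q e b)) // big_mkcond [RHS]big_mkcond.
  apply: eq_bigr => e _; rewrite in_setI [e \in cyc_edges s]inE.
  by case: (e \in cut H X); rewrite ?andbT ?andbF //; case: ifP.
have := count_leaves_enters X cw; rewrite !count_sum.
under eq_big_seq => x xs do rewrite leavesE ?sE //.
under [RHS]eq_big_seq => x xs do rewrite entersE ?sE //.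
by rewrite (crossings (fun e b => b == cut_pos H X e)) (crossings (fun e b => b != cut_pos H X e)).
Qed.

Lemma cycle_cut_meet1 s X b : closed_trail s -> cyc_edges s :&: cut H X != [set b].
Proof.
move=> ok; apply/eqP => K; have := cycle_cut_balance X ok.
by rewrite K !big_set1; case: (_ == _).
Qed.

Lemma cycle_cut_meet2 s X a c : closed_trail s -> a != c ->
  cyc_edges s :&: cut H X = [set a; c] ->
  (cyc_pos s a == cyc_pos s c) = (cut_pos H X a != cut_pos H X c).
Proof.
move=> ok ac K; have := cycle_cut_balance X ok.
rewrite K !big_setU1 ?inE // !big_set1.
by case: (cyc_pos s a); case: (cyc_pos s c); case: (cut_pos H X a); case: (cut_pos H X c).
Qed.

Lemma directed_closed_walk_cut w X : closed_walk H w ->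
  all (fun z => z.1 \in eset H) w -> all snd w ->
  {in cyc_edges w, forall e, e \in cut H X -> cut_pos H X e} ->
  {in cyc_edges w, forall e, e \notin cut H X}.
Proof.
move=> cw wE wF pos e; rewrite inE => /mapP[z zw ->].
apply: (closed_walk_one_way_cut cw wE) => // y yw yX.
by rewrite (allP wF y yw) pos // inE map_f.
Qed.

End ClosedTrails.

Section Connectivity.
Variables (V : finType) (d : Order.disp_t) (E : finOrderType d) (H : digraph V E).
Implicit Types (S : {set E}) (X : {set V}).

Lemma adjP S u v :
  reflect (exists2 e, e \in S &
             (src H e = u /\ tgt H e = v) \/ (src H e = v /\ tgt H e = u))
          (adj H S u v).
Proof.
apply: (iffP existsP) => [[e /andP[eS /orP[]/andP[/eqP su /eqP tv]]]|[e eS h]].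
- by exists e => //; left.
- by exists e => //; right.
by exists e; rewrite eS; case: h => [[-> ->]|[-> ->]]; rewrite !eqxx ?orbT.
Qed.

Lemma adj_sym S : symmetric (adj H S).
Proof. by move=> u v; apply/adjP/adjP => -[e eS h]; exists e => //; case: h; tauto. Qed.

Lemma adj_edge S e : e \in S -> adj H S (src H e) (tgt H e).
Proof. by move=> eS; apply/adjP; exists e => //; left. Qed.

Lemma connected_via_subset S S' : S \subset S' -> connected_via H S -> connected_via H S'.
Proof.
move=> sS cS u v uV vV; apply: connect_sub (cS u v uV vV) => x y /adjP[e eS h].
by apply/connect1/adjP; exists e => //; apply: (subsetP sS).
Qed.

Lemma connect_invariant S (phi : V -> bool) x y :
  {in S, forall e, phi (src H e) = phi (tgt H e)} ->
  connect (adj H S) x y -> phi x = phi y.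
Proof.
move=> inv /connectP[q xq ->]; elim: q x xq => //= z q IH x /andP[/adjP[e eS h] zq].
by rewrite -(IH z zq); case: h => [[<- <-]|[<- <-]]; rewrite inv.
Qed.

Lemma connected_via_cross S X x y : connected_via H S ->
  x \in vset H -> y \in vset H -> x \in X -> y \notin X ->
  exists2 e, e \in S & (src H e \in X) != (tgt H e \in X).
Proof.
move=> cS xV yV xX yX.
have [e /andP[eS eX]|none] := pickP [pred e in S | (src H e \in X) != (tgt H e \in X)].
  by exists e.
suff inv : {in S, forall e, (src H e \in X) = (tgt H e \in X)}.
  by have := connect_invariant (phi := fun v => v \in X) inv (cS x y xV yV); rewrite xX (negPf yX).
by move=> e eS; apply/eqP; move: (none e); rewrite /= eS => /negbFE.
Qed.

Lemma connected_via_meets_cut S X : wf H -> S \subset eset H -> connected_via H S ->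
  cut H X != set0 -> exists2 e, e \in S & e \in cut H X.
Proof.
move=> wfH sS cS /set0Pn[e]; rewrite inE => /andP[eE eX]; have [sV tV] := wfH e eE.
have cross : exists2 g, g \in S & (src H g \in X) != (tgt H g \in X).
  case: (boolP (src H e \in X)) eX => sX tX.
  - by apply: (connected_via_cross cS sV tV sX); move: tX; case: (_ \in _).
  - by apply: (connected_via_cross cS tV sV _ sX); move: tX; case: (_ \in _).
by case: cross => g gS gX; exists g; rewrite // inE (subsetP sS).
Qed.

Lemma connected_cut_neq0 X x y : connected H ->
  x \in vset H -> y \in vset H -> x \in X -> y \notin X -> cut H X != set0.
Proof.
move=> cH xV yV xX yX; have [e eE eX] := connected_via_cross cH xV yV xX yX.
by apply/set0Pn; exists e; rewrite inE eE.
Qed.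

Lemma cut_pos_closed X : {in eset H, forall e, tgt H e \in X -> src H e \in X} ->
  {in cut H X, forall e, cut_pos H X e}.
Proof.
move=> cl e; rewrite inE /cut_pos => /andP[/cl].
by case: (src H e \in X); case: (tgt H e \in X) => // /(_ isT).
Qed.

End Connectivity.

Section WalksOfPaths.
Variables (V : finType) (d : Order.disp_t) (E : finOrderType d) (H : digraph V E).
Implicit Types (S : {set E}) (pk : V -> V -> option E).

Definition dadj : rel V :=
  fun x y => [exists e in eset H, (src H e == x) && (tgt H e == y)].

Definition pick_adj S x y : option E :=
  [pick e in S | ((src H e == x) && (tgt H e == y)) || ((src H e == y) && (tgt H e == x))].
Definition pick_dadj x y : option E :=
  [pick e in eset H | (src H e == x) && (tgt H e == y)].

Definition edge_picker S pk (r : rel V) := forall x y, r x y ->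
  exists2 e, pk x y = Some e &
    e \in S /\ ((src H e = x /\ tgt H e = y) \/ (src H e = y /\ tgt H e = x)).

Fixpoint walk_of_path pk x (q : seq V) : seq (E * bool) :=
  if q is y :: q' then
    if pk x y is Some e then (e, src H e == x) :: walk_of_path pk y q' else [::]
  else [::].

Lemma pick_adjP S : edge_picker S (pick_adj S) (adj H S).
Proof.
move=> x y /existsP[e eP]; rewrite /pick_adj.
case: pickP => [g /andP[gS /orP[]/andP[/eqP sx /eqP ty]]|/(_ e)]; last by rewrite eP.
- by exists g => //; split => //; left.
- by exists g => //; split => //; right.
Qed.

Lemma pick_dadjP : edge_picker (eset H) pick_dadj dadj.
Proof.
move=> x y /existsP[e eP]; rewrite /pick_dadj.
case: pickP => [g /andP[gE /andP[/eqP sx /eqP ty]]|/(_ e)]; last by rewrite eP.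
by exists g => //; split => //; left.
Qed.

Lemma dadj_edge e : e \in eset H -> dadj (src H e) (tgt H e).
Proof. by move=> eE; apply/existsP; exists e; rewrite eE !eqxx. Qed.

Lemma pick_dadj_src x y e : pick_dadj x y = Some e -> src H e = x.
Proof. by rewrite /pick_dadj; case: pickP => // g /andP[_ /andP[/eqP sx _]] [<-]. Qed.

Section Picker.
Variables (S : {set E}) (pk : V -> V -> option E) (r : rel V).
Hypothesis pkP : edge_picker S pk r.

Lemma walk_of_path_edges x q : path r x q ->
  all (fun z => z.1 \in S) (walk_of_path pk x q).
Proof.
elim: q x => //= y q IH x /andP[xy yq].
by case: (pkP xy) => e -> [eS _] /=; rewrite eS IH.
Qed.

Lemma walk_of_path_ends x q : path r x q ->
  map (st_start H) (walk_of_path pk x q) = belast x q /\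
  map (st_end H) (walk_of_path pk x q) = q.
Proof.
elim: q x => //= y q IH x /andP[xy yq].
case: (pkP xy) => e -> [_ h] /=; case: (IH y yq) => -> ->.
rewrite /st_start /st_end /=.
by case: h => [[-> ->]|[-> ->]]; rewrite ?eqxx //; case: eqP => [->|].
Qed.

Lemma walk_of_path_verts x q : path r x q -> forall z, z \in walk_of_path pk x q ->
  src H z.1 \in x :: q /\ tgt H z.1 \in x :: q.
Proof.
elim: q x => //= y q IH x /andP[xy yq] z.
case: (pkP xy) => e -> [_ h]; rewrite inE => /orP[/eqP -> /=|zw].
  by case: h => [[-> ->]|[-> ->]]; rewrite !inE !eqxx ?orbT.
by case: (IH y yq z zw); rewrite !inE => -> ->; rewrite !orbT.
Qed.

Lemma walk_of_path_uniq x q : path r x q -> uniq (x :: q) ->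
  uniq (map fst (walk_of_path pk x q)).
Proof.
elim: q x => //= y q IH x /andP[xy yq] /andP[xq uq].
case: (pkP xy) => e -> [_ h] /=; rewrite IH // andbT.
apply/mapP => -[z zw ez]; case: (walk_of_path_verts yq zw) => sz tz.
by case/negP: xq; case: h => [[<- _]|[_ <-]]; rewrite ez.
Qed.

Lemma walk_of_path_closed e q : path r (tgt H e) q -> last (tgt H e) q = src H e ->
  closed_walk H ((e, true) :: walk_of_path pk (tgt H e) q).
Proof.
move=> qP ql; rewrite /closed_walk rot1_cons map_rcons /=.
case: (walk_of_path_ends qP) => -> ->.
by rewrite /st_start /st_end /= -ql -lastI.
Qed.

End Picker.

Lemma cycle_of_path S e : S \subset eset H -> e \in eset H -> e \notin S ->
  connect (adj H S) (tgt H e) (src H e) ->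
  exists s, [/\ is_cycle_trav H s, cyc_edges s \subset S :|: [set e] & (e, true) \in s].
Proof.
move=> sS eE eS /connectP[q0 q0P q0l]; case: (shortenP q0P) q0l => q qP uq _ ql.
have pkP := @pick_adjP S; set s := walk_of_path (pick_adj S) (tgt H e) q.
have sS' := walk_of_path_edges pkP qP.
exists ((e, true) :: s); split; last exact: mem_head.
- split => //=.
  + by rewrite eE; apply: sub_all sS' => z /= /(subsetP sS).
  + rewrite (walk_of_path_uniq pkP qP uq) andbT.
    by apply/mapP => -[z /(allP sS') /= zS ez]; case/negP: eS; rewrite ez.
  + rewrite (proj1 (walk_of_path_ends pkP qP)) /st_start /=.
    by move: uq; rewrite lastI -ql rcons_uniq.
  + exact: (walk_of_path_closed pkP qP (esym ql)).
- apply/subsetP => x; rewrite inE => /mapP[z]; rewrite inE => /orP[/eqP -> -> |zs ->].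
    by rewrite !inE eqxx orbT.
  by rewrite inE (allP sS' z zs).
Qed.

Lemma directed_closed_walk_of_path e : e \in eset H ->
  connect dadj (tgt H e) (src H e) ->
  exists w, [/\ (e, true) \in w, all (fun z => z.1 \in eset H) w, all snd w
              & closed_walk H w].
Proof.
move=> eE /connectP[q qP ql].
exists ((e, true) :: walk_of_path pick_dadj (tgt H e) q); split.
- exact: mem_head.
- by rewrite /= eE (walk_of_path_edges pick_dadjP qP).
- rewrite /=; elim: q (tgt H e) qP {ql} => //= y q IH x /andP[_ yq].
  by case ex: (pick_dadj x y) => [g|] //=; rewrite (pick_dadj_src ex) eqxx IH.
- exact: (walk_of_path_closed pick_dadjP qP (esym ql)).
Qed.

End WalksOfPaths.

Section CotreeCuts.
Variables (V : finType) (d : Order.disp_t) (E : finOrderType d).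
Variables (H : digraph V E) (T : {set E}).
Hypotheses (wfH : wf H) (sT : T \subset eset H) (cT : connected_via H T).

Lemma cotree_cut_mem b X : cut H X != set0 ->
  cut H X \subset (eset H :\: T) :|: [set b] -> b \in cut H X.
Proof.
move=> nX sX; case: (connected_via_meets_cut wfH sT cT nX) => g gT gX.
suff /eqP <- : g == b by [].
by move: (subsetP sX g gX); rewrite !inE gT.
Qed.

Lemma cotree_cut_eq b X Y : b \in T ->
  cut H X != set0 -> cut H X \subset (eset H :\: T) :|: [set b] ->
  cut H Y != set0 -> cut H Y \subset (eset H :\: T) :|: [set b] ->
  cut H X = cut H Y.
Proof.
move=> bT nX sX nY sY; have [bX bY] := (cotree_cut_mem nX sX, cotree_cut_mem nY sY).
have side Z g : g \in T -> g != b -> cut H Z \subset (eset H :\: T) :|: [set b] ->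
    (src H g \in Z) = (tgt H g \in Z).
  move=> gT gb sZ; apply/eqP/negPn/negP => cross.
  have : g \in cut H Z by rewrite inE (subsetP sT) // cross.
  by move/(subsetP sZ); rewrite !inE gT (negPf gb).
have [sbV _] := wfH (subsetP sT _ bT).
have parity z : z \in vset H ->
    ((z \in X) (+) (z \in Y)) = ((src H b \in X) (+) (src H b \in Y)).
  move=> zV; apply/esym/(@connect_invariant _ _ _ H T (fun z => (z \in X) (+) (z \in Y))).
    move=> g gT /=; have [->|gb] := eqVneq g b; last by rewrite (side X g) ?(side Y g).
    move: bX bY; rewrite !inE => /andP[_ +] /andP[_ +].
    by case: (src H b \in X); case: (tgt H b \in X); case: (src H b \in Y); case: (tgt H b \in Y).
  exact: cT.
apply/setP => e; rewrite !inE; case: (boolP (e \in eset H)) => //= eE.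
have [sV tV] := wfH eE; move: (parity _ sV) (parity _ tV).
case: (src H e \in X); case: (tgt H e \in X); case: (src H e \in Y);
  case: (tgt H e \in Y); case: (src H b \in X); case: (src H b \in Y) => //.
Qed.

Lemma cotree_cut_cocycle b X : b \in T ->
  cut H X != set0 -> cut H X \subset (eset H :\: T) :|: [set b] ->
  is_cocycle_side H X.
Proof.
move=> bT nX sX; split=> // Y nY sYX; apply: (cotree_cut_eq bT) => //.
exact: subset_trans sYX sX.
Qed.

End CotreeCuts.

(* [cut H (fund_side H T b)] is the fundamental cocycle C*(T;b), signed so that
   [b] is positive. *)
Definition fund_side (V : finType) (d : Order.disp_t) (E : finOrderType d)
    (H : digraph V E) (T : {set E}) (b : E) : {set V} :=
  [set z | connect (adj H (T :\ b)) (src H b) z].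

Lemma src_in_fund_side (V : finType) (d : Order.disp_t) (E : finOrderType d)
    (H : digraph V E) T b : src H b \in fund_side H T b.
Proof. by rewrite inE connect0. Qed.

Section FundamentalCutsAndCycles.
Variables (V : finType) (d : Order.disp_t) (E : finOrderType d).
Variables (H : digraph V E) (T : {set E}).
Hypotheses (wfH : wf H) (stT : spanning_tree H T).

Let sT : T \subset eset H. Proof. by case: stT. Qed.
Let cT : connected_via H T. Proof. by case: stT. Qed.
Let aT : forall s, is_cycle_trav H s -> ~ cyc_edges s \subset T. Proof. by case: stT. Qed.

Lemma tree_edge_not_loop e : e \in T -> src H e != tgt H e.
Proof.
move=> eT; apply/eqP => loop; apply: (aT (s := [:: (e, true)])).
- split=> //=; first by rewrite (subsetP sT).
  by rewrite /st_start /st_end /= loop.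
- by apply/subsetP => y; rewrite inE => /mapP[z]; rewrite inE => /eqP -> ->.
Qed.

Lemma fund_cocycle b : b \in T ->
  [/\ b \in cut H (fund_side H T b),
      cut H (fund_side H T b) \subset (eset H :\: T) :|: [set b]
    & is_cocycle_side H (fund_side H T b)].
Proof.
move=> bT; set X := fund_side H T b.
have side g : g \in T :\ b -> (src H g \in X) = (tgt H g \in X).
  move=> gT; rewrite !inE; apply/idP/idP => h; apply: connect_trans h (connect1 _).
    exact: adj_edge.
  by rewrite adj_sym; apply: adj_edge.
have bX : b \in cut H X.
  rewrite inE (subsetP sT _ bT) src_in_fund_side inE; apply/negP => back.
  have sTb : T :\ b \subset eset H by apply: subset_trans (subsetDl T _) sT.
  rewrite (sym_connect_sym (@adj_sym _ _ _ H _)) in back.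
  have [|s [sC sS _]] := cycle_of_path sTb (subsetP sT _ bT) _ back.
    by rewrite !inE eqxx.
  apply: (aT sC); apply: subset_trans sS _.
  by apply/subsetP => x; rewrite !inE => /orP[/andP[_ ->]|/eqP ->].
have sX : cut H X \subset (eset H :\: T) :|: [set b].
  apply/subsetP => e eX; have [eb|eb] := eqVneq e b; first by rewrite eb !inE eqxx orbT.
  move: eX; rewrite inE => /andP[eE cross]; rewrite !inE (negPf eb) eE orbF andbT.
  by apply: contra cross => eT; rewrite side // !inE eb.
split=> //; apply: (cotree_cut_cocycle wfH sT cT bT) => //.
by apply/set0Pn; exists b.
Qed.

Lemma fund_cycle e : e \in eset H -> e \notin T ->
  exists C, [/\ is_cycle_trav H C, cyc_edges C \subset T :|: [set e] & (e, true) \in C].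
Proof. by move=> eE eT; apply: cycle_of_path => //; have [sV tV] := wfH eE; apply: cT. Qed.

Lemma tree_no_directed_closed_walk w : w != [::] -> all snd w ->
  cyc_edges w \subset T -> ~ closed_walk H w.
Proof.
move=> wn wF wT cw; have wE : all (fun z => z.1 \in eset H) w.
  by apply/allP => z zw; apply/(subsetP sT)/(subsetP wT); rewrite inE map_f.
have [[e b] ebw] : exists z, z \in w by case: (w) wn => // z w' _; exists z; apply: mem_head.
have [eX Xe _] := fund_cocycle (subsetP wT e (mem_cyc_edges ebw)).
apply/negP: eX; apply: (directed_closed_walk_cut cw wE wF); last exact: mem_cyc_edges ebw.
move=> f fw fX; move: (subsetP Xe f fX); rewrite !inE (subsetP wT f fw) /= => /eqP->.
exact: src_in_fund_side.
Qed.

End FundamentalCutsAndCycles.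

Section TreeDuality.
Variables (V : finType) (d : Order.disp_t) (E : finOrderType d).
Variables (H : digraph V E) (T : {set E}) (s : seq (E * bool)) (x b : E) (X : {set V}).
Hypotheses (sOK : closed_trail H s) (sx : cyc_edges s \subset T :|: [set x]) (xT : x \notin T)
  (bT : b \in T) (Xb : cut H X \subset (eset H :\: T) :|: [set b]).

Let meet_sub y : y \in cyc_edges s -> y \in cut H X -> (y == b) || (y == x).
Proof.
move=> ys yX; move: (subsetP sx y ys) (subsetP Xb y yX); rewrite !inE.
by case/orP=> [->|->]; rewrite ?orbT //= => ->.
Qed.

Let bx : b != x. Proof. by apply: contraNneq xT => <-. Qed.

Lemma tree_cycle_cut_mem : x \in cyc_edges s -> b \in cut H X ->
  (b \in cyc_edges s) = (x \in cut H X).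
Proof.
move=> xs bX; apply/idP/idP => [bs|xX]; apply/negPn/negP => out.
- move/eqP: (cycle_cut_meet1 X b sOK); apply; apply/setP => y; rewrite in_setI in_set1.
  apply/andP/eqP => [[ys yX]|->] //.
  by case/orP: (meet_sub ys yX) => /eqP // yx; move: yX; rewrite yx (negPf out).
- move/eqP: (cycle_cut_meet1 X x sOK); apply; apply/setP => y; rewrite in_setI in_set1.
  apply/andP/eqP => [[ys yX]|->] //.
  by case/orP: (meet_sub ys yX) => /eqP // yb; move: ys; rewrite yb (negPf out).
Qed.

Lemma tree_cycle_cut_sign : x \in cyc_edges s -> b \in cut H X ->
  b \in cyc_edges s -> x \in cut H X ->
  (cyc_pos s b == cyc_pos s x) = (cut_pos H X b != cut_pos H X x).
Proof.
move=> xs bX bs xX; apply: (cycle_cut_meet2 sOK bx).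
apply/setP => y; rewrite in_setI in_set2.
apply/andP/idP => [[ys yX]|]; first exact: meet_sub.
by case/orP=> /eqP->.
Qed.

End TreeDuality.

Section Extrema.
Variables (d : Order.disp_t) (E : finOrderType d).
Implicit Type A : {set E}.
Local Open Scope order_scope.

Lemma is_min_exists A x0 : x0 \in A -> exists x, is_min A x.
Proof.
move=> x0A.
by case: (arg_minP (fun i : E => i) x0A) => x xA xmin; exists x; split.
Qed.

Lemma is_min_eq A B g x : is_min A g -> is_min B x -> x \in A -> g \in B -> g = x.
Proof. by case=> _ gmin [_ xmin] xA gB; apply/le_anti; rewrite gmin ?xmin. Qed.

Lemma is_min_setD1_max A w p : is_max A w -> is_min (A :\ w) p -> is_min A p.
Proof.
case=> _ wmax [pAw pmin]; move: (pAw); rewrite in_setD1 => /andP[_ pA]; split=> // y yA.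
have [->|yw] := eqVneq y w; first exact: wmax.
by apply: pmin; rewrite in_setD1 yw.
Qed.

End Extrema.

Section Criterion.
Variables (V : finType) (d : Order.disp_t) (E : finOrderType d).
Variables (H : digraph V E) (T : {set E}) (p : E).
Hypotheses (wfH : wf H) (fo : fully_optimal H T) (pmin : is_min (eset H) p).

Let stT : spanning_tree H T. Proof. by case: fo. Qed.
Let sT : T \subset eset H. Proof. by case: stT. Qed.
Let cT : connected_via H T. Proof. by case: stT. Qed.
Let opt_tree := proj1 (proj2 fo p pmin).
Let opt_cotree := proj2 (proj2 fo p pmin).

Lemma fund_cycle_min_dual e C g : e \in eset H -> e \notin T ->
  is_cycle_trav H C -> cyc_edges C \subset T :|: [set e] -> (e, true) \in C ->
  is_min (cyc_edges C) g ->
  [/\ g \in T, e \in cut H (fund_side H T g) & cut_pos H (fund_side H T g) e].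
Proof.
move=> eE eT Ccyc Ce eC gmin; have gC : g \in cyc_edges C by case: gmin.
have gneg : cyc_pos C g = false.
  have eET : e \in eset H :\: T by rewrite inE eT eE.
  by have := opt_cotree eET Ccyc Ce gmin; rewrite {1}/cyc_pos eC; case: (cyc_pos C g).
have ge : g != e by apply: contraFneq gneg => ->.
have gT : g \in T by move: (subsetP Ce g gC); rewrite !inE (negPf ge) orbF.
have [gX Xg _] := fund_cocycle wfH stT gT.
have Cok := cycle_trav_closed_trail Ccyc; have eC' := mem_cyc_edges eC.
have eX : e \in cut H (fund_side H T g) by rewrite -(tree_cycle_cut_mem Cok Ce Xg eC' gX).
split=> //; have := tree_cycle_cut_sign Cok Ce eT gT Xg eC' gX gC eX.
by rewrite gneg /cyc_pos eC /cut_pos src_in_fund_side; case: (_ \in _).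
Qed.

Lemma fund_cocycle_min_dual b g : b \in T -> b != p ->
  is_min (cut H (fund_side H T b)) g ->
  g \in eset H :\: T /\
  forall C, is_cycle_trav H C -> cyc_edges C \subset T :|: [set g] -> (g, true) \in C ->
    cyc_pos C b.
Proof.
move=> bT bp gmin; have [bX Xb Xcoc] := fund_cocycle wfH stT bT.
have gX : g \in cut H (fund_side H T b) by case: gmin.
have gneg : cut_pos H (fund_side H T b) g = false.
  have := opt_tree bT bp Xcoc Xb gmin.
  by rewrite {1}/cut_pos src_in_fund_side; case: (cut_pos _ _ g).
have gb : g != b by apply: contraFneq gneg => ->; apply: src_in_fund_side.
have gcotree : g \in eset H :\: T.
  by move: (subsetP Xb g gX); rewrite !inE (negPf gb) orbF andbC.
split=> // C Ccyc Cg gC; have Cok := cycle_trav_closed_trail Ccyc.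
have gT : g \notin T by move: gcotree; rewrite inE => /andP[].
have bC : b \in cyc_edges C by rewrite (tree_cycle_cut_mem Cok Cg Xb (mem_cyc_edges gC) bX).
have := tree_cycle_cut_sign Cok Cg gT bT Xb (mem_cyc_edges gC) bX bC gX.
by rewrite gneg {2}/cyc_pos gC {1}/cut_pos src_in_fund_side; case: (cyc_pos C b).
Qed.

Lemma fully_optimal_no_directed_closed_walk w : w != [::] ->
  all (fun z => z.1 \in eset H) w -> all snd w -> ~ closed_walk H w.
Proof.
move=> wn wE wF cw.
have wE' e : e \in cyc_edges w -> e \in eset H.
  by rewrite inE => /mapP[z zw ->]; apply: (allP wE).
have [wT|/subsetPn[e0 e0w e0T]] := boolP (cyc_edges w \subset T).
  exact: (tree_no_directed_closed_walk wfH stT wn wF wT cw).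
(* For the least tree edge x whose fundamental cocycle contains a cotree edge of
   the walk, every edge of the walk crossing C*(T;x) crosses it positively. *)
set M := [set y in T | [exists e in cyc_edges w :\: T, e \in cut H (fund_side H T y)]].
have fund_min e C g : e \in cyc_edges w -> e \notin T ->
    is_cycle_trav H C -> cyc_edges C \subset T :|: [set e] -> (e, true) \in C ->
    is_min (cyc_edges C) g -> g \in M /\ cut_pos H (fund_side H T g) e.
  move=> ew eT Ccyc Ce eC gmin.
  have [gT eX epos] := fund_cycle_min_dual (wE' e ew) eT Ccyc Ce eC gmin.
  by split=> //; rewrite inE gT; apply/exists_inP; exists e; rewrite // inE eT.
have [x xmin] : exists x, is_min M x.
  have [C [Ccyc Ce eC]] := fund_cycle wfH stT (wE' e0 e0w) e0T.
  have [g gmin] := is_min_exists (mem_cyc_edges eC).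
  by apply: (is_min_exists (x0 := g)); case: (fund_min e0 C g e0w e0T Ccyc Ce eC gmin).
have xM : x \in M by case: xmin.
move: (xM); rewrite inE => /andP[xT /exists_inP[e1]]; rewrite inE => /andP[_ e1w] e1X.
have [xX Xx _] := fund_cocycle wfH stT xT.
apply/negP: e1X; apply: (directed_closed_walk_cut cw wE wF) => // f fw fX.
have [fT|fT] := boolP (f \in T).
  by move: (subsetP Xx f fX); rewrite !inE fT /= => /eqP->; apply: src_in_fund_side.
have [C [Ccyc Cf fC]] := fund_cycle wfH stT (wE' f fw) fT.
have xC : x \in cyc_edges C.
  by rewrite (tree_cycle_cut_mem (cycle_trav_closed_trail Ccyc) Cf Xx (mem_cyc_edges fC) xX).
have [g gmin] := is_min_exists xC.
have [gM fpos] := fund_min f C g fw fT Ccyc Cf fC gmin.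
by rewrite -(is_min_eq gmin xmin xC gM).
Qed.

Lemma fully_optimal_dicut X : cut H X != set0 ->
  {in cut H X, forall e, cut_pos H X e} -> p \in cut H X.
Proof.
move=> nX pos; apply/negPn/negP => pX.
have [b0 b0T b0X] := connected_via_meets_cut wfH sT cT nX.
have bp b : b \in cut H X -> b != p by move=> bX; apply: contraNneq pX => <-.
(* Dually, the fundamental cycle of the least cotree edge x lying in the
   fundamental cocycle of a tree edge of the cut crosses the cut only positively. *)
set M := [set y in eset H :\: T | [exists b in T :&: cut H X, y \in cut H (fund_side H T b)]].
have fund_min b g : b \in T -> b \in cut H X -> is_min (cut H (fund_side H T b)) g ->
    g \in M.
  move=> bT bX gmin; have [gcotree _] := fund_cocycle_min_dual bT (bp b bX) gmin.
  by rewrite inE gcotree; apply/exists_inP; exists b; rewrite ?in_setI ?bT ?bX //; case: gmin.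
have [x xmin] : exists x, is_min M x.
  have [b0X' _ _] := fund_cocycle wfH stT b0T.
  have [g gmin] := is_min_exists b0X'.
  exact: (is_min_exists (fund_min b0 g b0T b0X gmin)).
have xM : x \in M by case: xmin.
move: (xM); rewrite inE => /andP[xcotree /exists_inP[b1]]; rewrite inE => /andP[b1T b1X] xX1.
move: xcotree; rewrite inE => /andP[xT xE].
have [C [Ccyc Cx xC]] := fund_cycle wfH stT xE xT; have Cok := cycle_trav_closed_trail Ccyc.
have at_x y : y \in T -> y \in cut H X -> x \in cut H (fund_side H T y) ->
    cyc_pos C y.
  move=> yT yX xXy; have [g gmin] := is_min_exists xXy.
  have gx := is_min_eq gmin xmin xXy (fund_min y g yT yX gmin).
  have [_ dual] := fund_cocycle_min_dual yT (bp y yX) gmin.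
  by rewrite gx in dual; apply: dual.
have b1C := at_x b1 b1T b1X xX1; have [Call Cuniq Cwalk] := Cok.
apply/negP: b1X; apply: (closed_walk_one_way_cut Cwalk Call _ b1C) => -[y b] yb /= yX.
rewrite (pos y yX) -(cyc_posE Cuniq yb).
have /orP[yT|/eqP->] : (y \in T) || (y == x).
  by move: (subsetP Cx y (mem_cyc_edges yb)); rewrite !inE.
- have [yXy Xy _] := fund_cocycle wfH stT yT.
  have xXy : x \in cut H (fund_side H T y).
    by rewrite -(tree_cycle_cut_mem Cok Cx Xy (mem_cyc_edges xC) yXy) (mem_cyc_edges yb).
  exact: at_x.
- exact: xC.
Qed.

Let cH : connected H. Proof. exact: connected_via_subset sT cT. Qed.
Let pE : p \in eset H. Proof. by case: pmin. Qed.

Lemma fully_optimal_no_directed_path_back e : e \in eset H ->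
  ~~ connect (dadj H) (tgt H e) (src H e).
Proof.
move=> eE; apply/negP => back; have [w [ew wE wF cw]] := directed_closed_walk_of_path eE back.
by apply: (fully_optimal_no_directed_closed_walk _ wE wF cw); apply: contraTneq ew => ->.
Qed.

Lemma fully_optimal_reachable_from_src z : z \in vset H -> connect (dadj H) (src H p) z.
Proof.
move=> zV; apply/negPn/negP => zR; set R := [set y | connect (dadj H) (src H p) y].
have [spV _] := wfH pE.
have /negP[] : p \notin cut H (~: R).
  by rewrite inE pE !inE connect0 (connect1 (dadj_edge pE)).
apply: fully_optimal_dicut.
  by apply: (connected_cut_neq0 (x := z) (y := src H p)); rewrite ?inE ?connect0.
apply: cut_pos_closed => e eE; rewrite !inE; apply: contra => se.
exact: connect_trans se (connect1 (dadj_edge eE)).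
Qed.

Lemma fully_optimal_reaches_tgt z : z \in vset H -> connect (dadj H) z (tgt H p).
Proof.
move=> zV; apply/negPn/negP => zR; set R := [set y | connect (dadj H) y (tgt H p)].
have [_ tpV] := wfH pE.
have /negP[] : p \notin cut H R.
  by rewrite inE pE !inE connect0 (connect_trans (connect1 (dadj_edge pE)) (connect0 _ _)).
apply: fully_optimal_dicut.
  by apply: (connected_cut_neq0 (x := tgt H p) (y := z)); rewrite ?inE ?connect0.
apply: cut_pos_closed => e eE; rewrite !inE.
exact: connect_trans (connect1 (dadj_edge eE)).
Qed.

Lemma fully_optimal_bipolar : bipolar H p.
Proof.
have [spV tpV] := wfH pE; split=> //.
  by case=> s [[sn sE _ _ cw] sF]; apply: (fully_optimal_no_directed_closed_walk sn sE sF).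
exists (src H p), (tgt H p); split; [|split; last by left].
- move=> v; split=> [[vV vin]|->].
  + apply/eqP/negPn/negP => vp.
    have /negP[] : p \notin cut H [set v].
      by rewrite inE pE !inE (negPf (vin p pE)) [src H p == v]eq_sym (negPf vp).
    apply: fully_optimal_dicut.
      by apply: (connected_cut_neq0 (x := v) (y := src H p)) => //; rewrite !inE // eq_sym.
    by apply: cut_pos_closed => e eE; rewrite inE (negPf (vin e eE)).
  + split=> // e eE; apply/eqP => te; case/negP: (fully_optimal_no_directed_path_back eE).
    by rewrite te; apply: fully_optimal_reachable_from_src; case: (wfH eE).
- move=> v; split=> [[vV vout]|->].
  + apply/eqP/negPn/negP => vp.
    have /negP[] : p \notin cut H (~: [set v]).
      by rewrite inE pE !inE (negPf (vout p pE)) [tgt H p == v]eq_sym (negPf vp).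
    apply: fully_optimal_dicut.
      by apply: (connected_cut_neq0 (x := tgt H p) (y := v)) => //; rewrite !inE ?negbK // eq_sym.
    by apply: cut_pos_closed => e eE; rewrite !inE (vout e eE).
  + split=> // e eE; apply/eqP => se; case/negP: (fully_optimal_no_directed_path_back eE).
    by rewrite se; apply: fully_optimal_reaches_tgt; case: (wfH eE).
Qed.

End Criterion.

Section Deletion.
Variables (V : finType) (d : Order.disp_t) (E : finOrderType d).
Variables (G : digraph V E) (w : E).

Lemma delete_wf : wf G -> wf (delete G w).
Proof. by move=> wfG e; rewrite /= in_setD1 => /andP[_ /wfG]. Qed.

Lemma delete_cycle_trav s : is_cycle_trav (delete G w) s -> is_cycle_trav G s.
Proof.
case=> sn sE su1 su2 cw; split=> //.
by apply: sub_all sE => z /=; rewrite in_setD1 => /andP[].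
Qed.

Lemma delete_cut X : cut (delete G w) X = cut G X :\ w.
Proof. by apply/setP => e; rewrite !inE /= andbA. Qed.

Variable T : {set E}.
Hypotheses (wfG : wf G) (fo : fully_optimal G T) (wmax : is_max (eset G) w) (wT : w \notin T).

Lemma delete_fully_optimal : fully_optimal (delete G w) T.
Proof.
case: fo => -[sT cT aT] opt; have wE : w \in eset G by case: wmax.
split.
  split=> //; last by move=> s /delete_cycle_trav; apply: aT.
  by apply/subsetP => e eT; rewrite /= in_setD1 (subsetP sT _ eT) andbT; apply: contraNneq wT => <-.
move=> q /(is_min_setD1_max wmax)/opt[optT optC]; split.
- move=> b bT bq X [nX _] Xb f [fX fmin].
  have XbG : cut G X \subset (eset G :\: T) :|: [set b].
    apply/subsetP => e eX; have [->|ew] := eqVneq e w; first by rewrite !inE wT wE.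
    have : e \in cut (delete G w) X by rewrite delete_cut in_setD1 ew.
    by move/(subsetP Xb); rewrite !inE /= => /orP[/and3P[-> _ ->]|->]; rewrite ?orbT.
  have nXG : cut G X != set0.
    by apply: contraNneq nX => X0; apply/eqP/setP => e; rewrite delete_cut in_setD1 X0 inE andbF.
  have fminG : is_min (cut G X) f.
    move: fX; rewrite delete_cut in_setD1 => /andP[_ fX]; split=> // y yX.
    have [->|yw] := eqVneq y w; first by case: wmax => _; apply; move: fX; rewrite inE => /andP[].
    by apply: fmin; rewrite delete_cut in_setD1 yw.
  exact: (optT b bT bq X (cotree_cut_cocycle wfG sT cT bT nXG XbG) XbG f fminG).
- move=> e eH s /delete_cycle_trav scyc se f fmin; apply: (optC e _ s scyc se f fmin).
  by move: eH; rewrite !inE /= => /and3P[-> _ ->].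
Qed.

End Deletion.

Section ContractionBasics.
Variables (V : finType) (d : Order.disp_t) (E : finOrderType d).
Variables (G : digraph V E) (w : E).
Implicit Type X : {set V}.

Definition merge (z : V) := if z == src G w then tgt G w else z.

Lemma contract_cut X : cut (contract G w) X = cut G (merge @^-1: X).
Proof.
apply/setP => e; rewrite !inE /merge /=; have [->|ew] := eqVneq e w; last by [].
by rewrite eqxx if_same eqxx /= !andbF.
Qed.

Lemma contract_cut_pos X e : cut_pos (contract G w) X e = cut_pos G (merge @^-1: X) e.
Proof. by rewrite /cut_pos inE. Qed.

Lemma merge_preim_id X : (src G w \in X) = (tgt G w \in X) -> merge @^-1: X = X.
Proof. by move=> uv; apply/setP => z; rewrite inE /merge; case: eqP => // ->. Qed.

Lemma connect_contract S x y : connect (adj G S) x y ->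
  connect (adj (contract G w) (S :\ w)) (merge x) (merge y).
Proof.
case/connectP=> q xq ->; elim: q x xq => [|z q IH] x /=; first by rewrite connect0.
case/andP=> /adjP[e eS h] zq; apply: connect_trans (IH z zq).
have [ew|ew] := eqVneq e w.
  have mergewE : merge (src G w) = merge (tgt G w) by rewrite /merge eqxx; case: eqP.
  by move: h; rewrite ew => -[[<- <-]|[<- <-]]; rewrite mergewE connect0.
apply/connect1/adjP; exists e; first by rewrite in_setD1 ew.
by case: h => [[<- <-]|[<- <-]]; [left|right].
Qed.

Hypotheses (wfG : wf G) (wE : w \in eset G) (uv : src G w != tgt G w).

Lemma contract_vset : vset (contract G w) = vset G :\ src G w.
Proof. by rewrite /= (negPf uv). Qed.

Lemma contract_wf : wf (contract G w).
Proof.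
have merge_in z : z \in vset G -> merge z \in vset (contract G w).
  move=> zV; have [_ tV] := wfG wE; rewrite contract_vset in_setD1 /merge.
  by have [_|->] := eqVneq z (src G w); first by rewrite eq_sym uv.
move=> e; rewrite /= in_setD1 => /andP[_ /wfG[sV tV]].
by split; apply: merge_in.
Qed.

End ContractionBasics.

Section Contraction.
Variables (V : finType) (d : Order.disp_t) (E : finOrderType d).
Variables (G : digraph V E) (T : {set E}) (w : E).
Hypotheses (wfG : wf G) (fo : fully_optimal G T) (wmax : is_max (eset G) w) (wT : w \in T).

Let stT : spanning_tree G T. Proof. by case: fo. Qed.
Let sT : T \subset eset G. Proof. by case: stT. Qed.
Let cT : connected_via G T. Proof. by case: stT. Qed.
Let wE : w \in eset G. Proof. by case: wmax. Qed.
Let uv : src G w != tgt G w. Proof. exact: (tree_edge_not_loop stT wT). Qed.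

Lemma contract_fund_cut y : y \in T -> y != w ->
  cut (contract G w) (fund_side G T y) = cut G (fund_side G T y) /\
  forall e, cut_pos (contract G w) (fund_side G T y) e = cut_pos G (fund_side G T y) e.
Proof.
move=> yT yw; have [_ Xy _] := fund_cocycle wfG stT yT.
suff preim : merge G w @^-1: fund_side G T y = fund_side G T y.
  by rewrite contract_cut preim; split=> // e; rewrite contract_cut_pos preim.
apply: merge_preim_id; apply/eqP/negPn/negP => cross.
have : w \in cut G (fund_side G T y) by rewrite inE wE.
by move/(subsetP Xy); rewrite !inE wT /= eq_sym (negPf yw).
Qed.

Lemma contract_fund_cocycle y : y \in T -> y != w ->
  y \in cut (contract G w) (fund_side G T y) /\
  cut (contract G w) (fund_side G T y) \subset
    (eset (contract G w) :\: (T :\ w)) :|: [set y].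
Proof.
move=> yT yw; have [-> _] := contract_fund_cut yT yw.
have [yX Xy _] := fund_cocycle wfG stT yT; split=> //.
apply/subsetP => e eX; have [->|ey] := eqVneq e y; first by rewrite !inE eqxx orbT.
move: (subsetP Xy e eX); rewrite !inE (negPf ey) /= orbF => /andP[eT eE].
have ew : e != w by apply: contraNneq eT => ->.
by rewrite ew (negPf eT) eE.
Qed.

Lemma contract_spanning_tree : spanning_tree (contract G w) (T :\ w).
Proof.
split.
- by apply/subsetP => e; rewrite !in_setD1 => /andP[-> /(subsetP sT)].
- move=> a c; rewrite (contract_vset uv) !in_setD1 => /andP[au aV] /andP[cu cV].
  have := connect_contract w (cT aV cV).
  by rewrite /merge (negPf au) (negPf cu).
- move=> s scyc sTw; case: (scyc) => sn _ _ _ _.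
  have [b bs] : exists b, b \in cyc_edges s.
    by case: (s) sn => // -[b0 c] s' _; exists b0; apply: (mem_cyc_edges (mem_head _ _)).
  move: (subsetP sTw b bs); rewrite in_setD1 => /andP[bw bT].
  have [bX Xb] := contract_fund_cocycle bT bw.
  move/eqP: (cycle_cut_meet1 (fund_side G T b) b (cycle_trav_closed_trail scyc)); apply.
  apply/setP => y; rewrite in_setI in_set1; apply/andP/eqP => [[ys yX]|->] //.
  move: (subsetP sTw y ys) (subsetP Xb y yX); rewrite !inE => /andP[yw ->].
  by rewrite yw /= => /eqP.
Qed.

Lemma contract_fund_cycle_mem e s C y : e \notin T ->
  closed_trail (contract G w) s -> cyc_edges s \subset (T :\ w) :|: [set e] ->
  e \in cyc_edges s ->
  closed_trail G C -> cyc_edges C \subset T :|: [set e] -> e \in cyc_edges C ->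
  y \in T -> y != w -> (y \in cyc_edges s) = (y \in cyc_edges C).
Proof.
move=> eT sok se es Cok Ce eC yT yw.
have [yX Xy _] := fund_cocycle wfG stT yT; have [yXc Xyc] := contract_fund_cocycle yT yw.
have [cuty _] := contract_fund_cut yT yw.
by rewrite (tree_cycle_cut_mem sok se Xyc es yXc) (tree_cycle_cut_mem Cok Ce Xy eC yX) cuty.
Qed.

Section Optimality.
Variable q : E.
Hypothesis qmin : is_min (eset (contract G w)) q.
Let qminG : is_min (eset G) q. Proof. exact: (is_min_setD1_max wmax qmin). Qed.

Lemma contract_opt_tree b X f : b \in T :\ w -> b != q -> is_cocycle_side (contract G w) X ->
  cut (contract G w) X \subset (eset (contract G w) :\: (T :\ w)) :|: [set b] ->
  is_min (cut (contract G w) X) f ->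
  cut_pos (contract G w) X b != cut_pos (contract G w) X f.
Proof.
rewrite in_setD1 => /andP[bw bT] bq [nX _] Xb fmin; rewrite !contract_cut_pos.
move: nX Xb fmin; rewrite contract_cut; set Y := merge G w @^-1: X => nY Yb fmin.
have YbG : cut G Y \subset (eset G :\: T) :|: [set b].
  apply: subset_trans Yb _; apply: setSU; apply/subsetP => e.
  by rewrite !inE negb_and negbK => /andP[/orP[/eqP->|->] /andP[]]; rewrite ?eqxx ?wT.
have [optT _] := proj2 fo q qminG.
exact: (optT b bT bq Y (cotree_cut_cocycle wfG sT cT bT nY YbG) YbG f fmin).
Qed.

Local Open Scope order_scope.

Lemma contract_opt_cotree e s f : e \in eset (contract G w) :\: (T :\ w) ->
  is_cycle_trav (contract G w) s -> cyc_edges s \subset (T :\ w) :|: [set e] ->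
  is_min (cyc_edges s) f -> cyc_pos s e != cyc_pos s f.
Proof.
rewrite !inE negb_and negbK => /andP[Tw /andP[ew eE]] scyc se fmin.
have eT : e \notin T by move: Tw; rewrite (negPf ew).
have sok := cycle_trav_closed_trail scyc.
have es : e \in cyc_edges s.
  have [_ _ acyc] := contract_spanning_tree; apply/negPn/negP => ne; apply: (acyc s scyc).
  apply/subsetP => y ys; move: (subsetP se y ys); rewrite in_setU in_set1.
  by case/orP=> [//|/eqP ye]; move: ys; rewrite ye (negPf ne).
have [C [Ccyc Ce eC]] := fund_cycle wfG stT eE eT; have Cok := cycle_trav_closed_trail Ccyc.
have [g gmin] := is_min_exists (mem_cyc_edges eC).
have [gT eXg eposg] := fund_cycle_min_dual wfG fo qminG eE eT Ccyc Ce eC gmin.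
have ge : g <= e by case: gmin => _; apply; apply: mem_cyc_edges eC.
have gw : g != w.
  apply: contra_neq ew => gw; apply/le_anti; case: wmax => _ -> //.
  by rewrite -gw ge.
have mem y := contract_fund_cycle_mem eT sok se es Cok Ce (mem_cyc_edges eC) (y := y).
have gs : g \in cyc_edges s by rewrite mem //; case: gmin.
have fg : f = g.
  apply: (is_min_eq fmin gmin gs); have [fs _] := fmin.
  move: (subsetP se f fs); rewrite in_setU in_set1 in_setD1 => /orP[/andP[fw fT]|/eqP->].
    by rewrite -mem.
  exact: mem_cyc_edges eC.
have [gXc Xgc] := contract_fund_cocycle gT gw; have [cutg posg] := contract_fund_cut gT gw.
have ETw : e \notin T :\ w by rewrite in_setD1 (negPf eT) andbF.
have gTw : g \in T :\ w by rewrite in_setD1 gw gT.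
have eXc : e \in cut (contract G w) (fund_side G T g) by rewrite cutg.
have := tree_cycle_cut_sign sok se ETw gTw Xgc es gXc gs eXc.
rewrite fg !posg {1}/cut_pos src_in_fund_side eposg eq_sym /=.
by move/negbT.
Qed.

End Optimality.

Lemma contract_fully_optimal : fully_optimal (contract G w) (T :\ w).
Proof.
split=> [|q qmin]; first exact: contract_spanning_tree.
split=> [b bT bq X Xc Xb f fmin|e eH s scyc se f fmin].
  exact: (contract_opt_tree qmin bT bq Xc Xb fmin).
exact: (contract_opt_cotree qmin eH scyc se fmin).
Qed.

End Contraction.

Unset Implicit Arguments.

Theorem lemma3p1 (V : finType) (d : Order.disp_t) (E : finOrderType d)
  (G : digraph V E) (p w : E) (T : {set E}) :
  wf G -> connected G -> 2 <= #|eset G| ->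
  is_min (eset G) p -> is_max (eset G) w ->
  bipolar G p -> fully_optimal G T ->
  (w \in T -> bipolar (contract G w) p /\ fully_optimal (contract G w) (T :\ w)) /\
  (w \notin T -> bipolar (delete G w) p /\ fully_optimal (delete G w) T) /\
  (bipolar (contract G w) p \/ bipolar (delete G w) p).
Proof.
move=> wfG _ card2 pmin wmax _ fo.
have [[pE pleast] [wE wgreatest]] := (pmin, wmax).
have pw : p != w.
  apply: contraTneq card2 => pw; rewrite -ltnNge ltnS -(cards1 p) subset_leq_card //.
  by apply/subsetP => y yE; rewrite in_set1 eq_le pleast // pw wgreatest.
have pmin' : is_min (eset G :\ w) p.
  by split=> [|y /setD1P[_ /pleast]]; rewrite // in_setD1 pw.
have contractP : w \in T -> bipolar (contract G w) p /\ fully_optimal (contract G w) (T :\ w).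
  move=> wT; have foC := contract_fully_optimal wfG fo wmax wT.
  split=> //; apply: (fully_optimal_bipolar _ foC pmin').
  by apply: (contract_wf wfG wE); apply: (tree_edge_not_loop (proj1 fo) wT).
have deleteP : w \notin T -> bipolar (delete G w) p /\ fully_optimal (delete G w) T.
  move=> wT; have foD := delete_fully_optimal wfG fo wmax wT.
  by split=> //; apply: (fully_optimal_bipolar (delete_wf wfG) foD pmin').
do 2!split=> //; have [/contractP[] | /deleteP[]] := boolP (w \in T); by [left | right].
Qed.
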